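(* Let $(A,\leq,\cdot,/)$ be a right-residuated magma satisfying condition (N). For $a\in A$ let $(a]=\{x\in A\mid x\leq a\}$. Then: (1) each $(a]$ is closed under $\sqcap$; (2) the following are equivalent: (a) $A$ is a narhoop; (b) for every $a\in A$, $\sqcap$ is commutative on $(a]$; (c) for every $a\in A$, $\sqcap$ is associative on $(a]$.
   Context: Write $xy$ for $x\cdot y$; $\cdot$ binds more strongly than $/$, and $/$ binds more strongly than $\sqcap$, where $x\sqcap y := (x/y)y$. A right-residuated magma is a structure $(A,\leq,\cdot,/)$ where $(A,\leq)$ is a poset and $xy\leq z\iff x\leq z/y$ for all $x,y,z\in A$. Condition (N): for all $x,y\in A$, $x\leq y\iff x = y\sqcap x$. A narhoop is a right-residuated magma such that for all $x,y$: $x\leq y\iff x\sqcap y = x = y\sqcap x$; equivalently, a right-residuated magma satisfying (N) and the identity $(x\sqcap y)\sqcap x = x\sqcap y$. *)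

Record right_residuated_magma {A : Type} (le : A -> A -> Prop)
    (mul : A -> A -> A) (rdiv : A -> A -> A) : Prop := {
  rrm_refl  : forall x, le x x;
  rrm_antisym : forall x y, le x y -> le y x -> x = y;
  rrm_trans : forall x y z, le x y -> le y z -> le x z;
  rrm_resid : forall x y z, le (mul x y) z <-> le x (rdiv z y)
}.

Definition sqcap {A : Type} (mul rdiv : A -> A -> A) (x y : A) : A :=
  mul (rdiv x y) y.

Definition condN {A : Type} (le : A -> A -> Prop) (mul rdiv : A -> A -> A) : Prop :=
  forall x y, le x y <-> x = sqcap mul rdiv y x.

Definition narhoop {A : Type} (le : A -> A -> Prop) (mul rdiv : A -> A -> A) : Prop :=
  right_residuated_magma le mul rdiv /\
  (forall x y, le x y <-> (sqcap mul rdiv x y = x /\ x = sqcap mul rdiv y x)).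

Definition downset {A : Type} (le : A -> A -> Prop) (a : A) : A -> Prop :=
  fun x => le x a.

From Stdlib Require Import Setoid.

(* In a right-residuated magma, [x ⊓ y <= x], and [⊓] is monotone in its first
   argument; (N) says that [y ⊓ x = x] whenever [x <= y].  Inside [(a]] this
   gives [x ⊓ y <= a ⊓ y = y], so [x ⊓ y] is a lower bound of [x] and [y].
   A narhoop is exactly a structure where moreover [x ⊓ y = x] for [x <= y],
   and then [x ⊓ y] is the greatest lower bound of [x] and [y]: on each [(a]]
   it is the meet, hence commutative and associative.  Conversely, for
   [x <= y] commutativity on [(y]] gives [x ⊓ y = y ⊓ x = x], and
   associativity gives [x = x ⊓ (y ⊓ x) = (x ⊓ y) ⊓ x <= x ⊓ y]. *)

Section RightResiduatedMagma.

Variables (A : Type) (le : A -> A -> Prop) (mul rdiv : A -> A -> A).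
Hypothesis HA : right_residuated_magma le mul rdiv.

Local Notation "x ≤ y" := (le x y) (at level 70).
Local Notation "x ⊓ y" := (sqcap mul rdiv x y) (at level 40, left associativity).

Let le_refl := rrm_refl _ _ _ HA.
Let le_trans := rrm_trans _ _ _ HA.
Let le_antisym := rrm_antisym _ _ _ HA.
Let residuation := rrm_resid _ _ _ HA.

Lemma sqcap_le_l x y : x ⊓ y ≤ x.
Proof. apply residuation, le_refl. Qed.

Lemma rdiv_le_l x x' y : x ≤ x' -> rdiv x y ≤ rdiv x' y.
Proof. intros Hx. apply residuation. exact (le_trans _ _ _ (sqcap_le_l x y) Hx). Qed.

Lemma mul_le_l x x' y : x ≤ x' -> mul x y ≤ mul x' y.
Proof.
  intros Hx. apply residuation.
  apply (le_trans _ _ _ Hx), residuation, le_refl.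
Qed.

Lemma sqcap_le_mono_l x x' y : x ≤ x' -> x ⊓ y ≤ x' ⊓ y.
Proof. intros Hx. apply mul_le_l, rdiv_le_l, Hx. Qed.

Lemma downset_sqcap a x y :
  downset le a x -> downset le a y -> downset le a (x ⊓ y).
Proof. intros Hx Hy. exact (le_trans _ _ _ (sqcap_le_l x y) Hx). Qed.

Lemma eq_of_same_lower_bounds x y : (forall w, w ≤ x <-> w ≤ y) -> x = y.
Proof.
  intros Hxy. apply le_antisym.
  - apply Hxy, le_refl.
  - apply Hxy, le_refl.
Qed.

Lemma narhoopE :
  condN le mul rdiv ->
  narhoop le mul rdiv <-> (forall x y, x ≤ y -> x ⊓ y = x).
Proof.
  intros HN. split.
  - intros [_ Hnar] x y Hxy. apply Hnar, Hxy.
  - intros Hsq. split; [exact HA |]. intros x y. split.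
    + intros Hxy. split; [apply Hsq, Hxy | apply HN, Hxy].
    + intros [_ Hyx]. apply HN, Hyx.
Qed.

Section ConditionN.

Hypothesis HN : condN le mul rdiv.

Lemma sqcap_of_le x y : x ≤ y -> y ⊓ x = x.
Proof. intros Hxy. symmetry. apply HN, Hxy. Qed.

Lemma sqcap_le_r_downset a x y : x ≤ a -> y ≤ a -> x ⊓ y ≤ y.
Proof.
  intros Hx Hy. rewrite <- (sqcap_of_le y a Hy) at 2.
  apply sqcap_le_mono_l, Hx.
Qed.

Section Narhoop.

Hypothesis sqcap_le : forall x y, x ≤ y -> x ⊓ y = x.

Lemma sqcap_greatest w x y : w ≤ x -> w ≤ y -> w ≤ x ⊓ y.
Proof. intros Hx Hy. rewrite <- (sqcap_le w y Hy). apply sqcap_le_mono_l, Hx. Qed.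

Lemma le_sqcap_downset a x y : x ≤ a -> y ≤ a ->
  forall w, w ≤ x ⊓ y <-> w ≤ x /\ w ≤ y.
Proof.
  intros Hx Hy w. split.
  - intros Hw. split.
    + exact (le_trans _ _ _ Hw (sqcap_le_l x y)).
    + exact (le_trans _ _ _ Hw (sqcap_le_r_downset a x y Hx Hy)).
  - intros [Hwx Hwy]. apply sqcap_greatest; assumption.
Qed.

Lemma sqcap_comm_downset a x y : x ≤ a -> y ≤ a -> x ⊓ y = y ⊓ x.
Proof.
  intros Hx Hy. apply eq_of_same_lower_bounds. intros w.
  rewrite (le_sqcap_downset a x y Hx Hy), (le_sqcap_downset a y x Hy Hx).
  tauto.
Qed.

Lemma sqcap_assoc_downset a x y z : x ≤ a -> y ≤ a -> z ≤ a ->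
  x ⊓ y ⊓ z = x ⊓ (y ⊓ z).
Proof.
  intros Hx Hy Hz. apply eq_of_same_lower_bounds. intros w.
  rewrite (le_sqcap_downset a _ z (downset_sqcap a x y Hx Hy) Hz),
    (le_sqcap_downset a x _ Hx (downset_sqcap a y z Hy Hz)),
    (le_sqcap_downset a x y Hx Hy), (le_sqcap_downset a y z Hy Hz).
  tauto.
Qed.

End Narhoop.

Lemma sqcap_le_of_comm_downset :
  (forall a x y, x ≤ a -> y ≤ a -> x ⊓ y = y ⊓ x) ->
  forall x y, x ≤ y -> x ⊓ y = x.
Proof.
  intros Hcomm x y Hxy. rewrite (Hcomm y x y Hxy (le_refl y)).
  apply sqcap_of_le, Hxy.
Qed.

Lemma sqcap_le_of_assoc_downset :
  (forall a x y z, x ≤ a -> y ≤ a -> z ≤ a -> x ⊓ y ⊓ z = x ⊓ (y ⊓ z)) ->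
  forall x y, x ≤ y -> x ⊓ y = x.
Proof.
  intros Hassoc x y Hxy. apply le_antisym; [apply sqcap_le_l |].
  assert (Hx : x ⊓ y ⊓ x = x).
  { rewrite (Hassoc y x y x Hxy (le_refl y) Hxy), (sqcap_of_le x y Hxy).
    apply sqcap_of_le, le_refl. }
  rewrite <- Hx at 1. apply sqcap_le_l.
Qed.

End ConditionN.

End RightResiduatedMagma.

Theorem mainTheorem5 (A : Type) (le : A -> A -> Prop) (mul rdiv : A -> A -> A)
  (HA : right_residuated_magma le mul rdiv) (HN : condN le mul rdiv) :
  (* (1) each (a] is closed under ⊓ *)
  (forall a x y, downset le a x -> downset le a y ->
     downset le a (sqcap mul rdiv x y)) /\
  (* (2) (a) <-> (b) and (a) <-> (c) *)
  ((narhoop le mul rdiv <->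
      (forall a x y, downset le a x -> downset le a y ->
         sqcap mul rdiv x y = sqcap mul rdiv y x)) /\
   (narhoop le mul rdiv <->
      (forall a x y z, downset le a x -> downset le a y -> downset le a z ->
         sqcap mul rdiv (sqcap mul rdiv x y) z =
         sqcap mul rdiv x (sqcap mul rdiv y z)))).
Proof.
  unfold downset. rewrite (narhoopE A le mul rdiv HA HN).
  split; [| split; split].
  - exact (downset_sqcap A le mul rdiv HA).
  - exact (sqcap_comm_downset A le mul rdiv HA HN).
  - exact (sqcap_le_of_comm_downset A le mul rdiv HA HN).
  - exact (sqcap_assoc_downset A le mul rdiv HA HN).
  - exact (sqcap_le_of_assoc_downset A le mul rdiv HA HN).
Qed.
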